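(* Let $v^1_p$ be the positive solution of $-(tv')'=t|v|^{p-1}v$ on $(0,1)$, $v'(0)=0$, $v(1)=0$, and let $$\nu_1(p)=\min\Big\{\frac{\int_0^1 t\big(|\phi'|^2-p|v^1_p|^{p-1}\phi^2\big)dt}{\int_0^1 t^{-1}\phi^2dt}:\ \phi\in\mathcal H_{0,\mathrm{rad}},\ \phi\neq0\Big\}$$ be the (unique) negative radial singular eigenvalue associated with $v^1_p$. Then $\lim_{p\to\infty}\nu_1(p)=-1$.
   Context: $\mathcal H_{0,\mathrm{rad}}$ is the space of radial functions $w\in H^1_0(B)$ ($B$ the unit disc of $\mathbb R^2$) with $\int_B|x|^{-2}w^2dx<\infty$; in the radial variable, functions $\phi$ on $(0,1)$ with $\int_0^1 t|\phi'|^2dt<\infty$, $\int_0^1t^{-1}\phi^2dt<\infty$, $\phi(1)=0$. It is known that this minimum is attained and satisfies $-1<\nu_1(p)<0$ for every $p>1$. *)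

From Stdlib Require Import Reals Lra.
Open Scope R_scope.

Definition powp (x a : R) : R := if Rle_dec x 0 then 0 else Rpower x a.

Definition RI_on (f : R -> R) (a b l : R) : Prop :=
  exists pr : Riemann_integrable f a b, RiemannInt pr = l.

Definition imp_int01 (f : R -> R) (l : R) : Prop :=
  (forall e, 0 < e <= 1 -> exists I, RI_on f e 1 I) /\
  (forall eps, 0 < eps -> exists delta, 0 < delta /\
     forall e I, 0 < e < delta -> e <= 1 -> RI_on f e 1 I -> Rabs (I - l) < eps).

Definition left_cont_at1 (f : R -> R) : Prop :=
  forall eps, 0 < eps -> exists delta, 0 < delta /\
    forall s, 1 - delta < s <= 1 -> Rabs (f s - f 1) < eps.

Definition LE_positive_solution (p : R) (v : R -> R) : Prop :=
  (forall t, 0 <= t < 1 -> 0 < v t) /\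
  v 1 = 0 /\
  left_cont_at1 v /\
  derivable_pt_lim v 0 0 /\
  exists dv : R -> R,
    (forall t, 0 < t < 1 -> derivable_pt_lim v t (dv t)) /\
    (forall t, 0 < t < 1 ->
       derivable_pt_lim (fun s => s * dv s) t
         (- (t * (powp (Rabs (v t)) (p - 1) * v t)))).

(* Rayleigh quotients of the radial singular eigenvalue problem:
   q = int_0^1 t (|phi'|^2 - p |v|^(p-1) phi^2) dt / int_0^1 t^-1 phi^2 dt,
   phi ranging over nonzero radial test functions in H_{0,rad}
   (here: phi continuous on (0,1], C^1-differentiable on (0,1), phi(1)=0,
   int t|phi'|^2 < oo and int t^-1 phi^2 < oo). *)
Definition rayleigh_set (p : R) (v : R -> R) (q : R) : Prop :=
  exists (phi dphi : R -> R) (A C N : R),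
    (forall t, 0 < t < 1 -> derivable_pt_lim phi t (dphi t)) /\
    (forall t, 0 < t < 1 -> continuity_pt phi t) /\
    left_cont_at1 phi /\
    phi 1 = 0 /\
    (exists t, 0 < t <= 1 /\ phi t <> 0) /\
    imp_int01 (fun t => t * (dphi t)^2) A /\
    imp_int01 (fun t => (phi t)^2 / t) C /\
    imp_int01 (fun t => t * ((dphi t)^2 - p * powp (Rabs (v t)) (p - 1) * (phi t)^2)) N /\
    q = N / C.

(* Greatest lower bound of a set of reals (equals the minimum when attained). *)
Definition is_glb_R (E : R -> Prop) (m : R) : Prop :=
  (forall x, E x -> m <= x) /\ (forall b, (forall x, E x -> b <= x) -> b <= m).

(** The lower bound is a Picone argument with the radial derivative of the
    solution: [w = -v'] solves the linearised equation with the singular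
    weight, [-(t w')' - p t |v|^(p-1) w = -w/t], so [k = t w'/w] satisfies
    the Riccati equation [k' = (1 - k^2)/t - p t |v|^(p-1)], [|k| <= 1], and
    [d(k phi^2)/dt <= t (phi'^2 - p |v|^(p-1) phi^2) + phi^2/t] for every test
    function [phi].  This gives [nu_1(p) >= -1] for every [p > 1].

    For the upper bound we test with [psi(t) = -v'(t) + v'(1) t], which
    vanishes at [t = 1].  Writing [m(t) = t |v'(t)| = int_0^t s v^p], the
    numerator plus the denominator of its Rayleigh quotient is at most
    [2 m(1)^2], while the denominator is at least [p m(1)^2 / 4096]: on the
    scale [t ~ sqrt (v(0) / (p v(0)^p))] the mass [m(t)] is already of order
    [v(0)/p], which by a Pohozaev identity dominates [m(1) <= 4 v(0)/(p+1)].
    Hence [nu_1(p) <= -1 + 8192/p]. *)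

From Stdlib Require Import Reals Lra Lia ClassicalEpsilon Classical.
From Coquelicot Require Import Coquelicot.
Open Scope R_scope.

(** * Calculus and Riemann integrals *)

Lemma MVT_interior (h dh : R -> R) x y :
  x < y -> (forall c, x <= c <= y -> continuity_pt h c) ->
  (forall c, x < c < y -> derivable_pt_lim h c (dh c)) ->
  exists c, x < c < y /\ h y - h x = dh c * (y - x).
Proof.
  intros Hxy Hc Hd.
  assert (pr1 : forall c, x < c < y -> derivable_pt h c).
  { intros c Hc'. exists (dh c). apply Hd; auto. }
  assert (pr2 : forall c, x < c < y -> derivable_pt id c).
  { intros c _. apply derivable_pt_id. }
  destruct (MVT h id x y pr1 pr2 Hxy Hc) as [c [P E]].
  { intros; apply derivable_continuous_pt, derivable_pt_id. }
  exists c; split; auto.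
  rewrite (derive_pt_eq_0 h c (dh c) (pr1 c P) (Hd c P)) in E.
  rewrite (derive_pt_eq_0 id c 1 (pr2 c P) (derivable_pt_lim_id c)) in E.
  unfold id in E. lra.
Qed.

Lemma le_of_derive_ge0 (h dh : R -> R) x y : x <= y ->
  (forall c, x <= c <= y -> continuity_pt h c) ->
  (forall c, x < c < y -> derivable_pt_lim h c (dh c)) ->
  (forall c, x < c < y -> 0 <= dh c) -> h x <= h y.
Proof.
  intros Hxy Hc Hd Hp. destruct (Rle_lt_or_eq_dec x y Hxy) as [Hlt| ->]; [|lra].
  destruct (MVT_interior h dh x y Hlt Hc Hd) as [c [Hc1 Hc2]].
  assert (0 <= dh c * (y - x)) by (apply Rmult_le_pos; [apply Hp; lra|lra]). lra.
Qed.

Lemma derivable_pt_lim_loc (f g : R -> R) x l d : 0 < d ->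
  (forall y, Rabs (y - x) < d -> f y = g y) ->
  derivable_pt_lim f x l -> derivable_pt_lim g x l.
Proof.
  intros Hd He H. apply is_derive_Reals. apply is_derive_ext_loc with f.
  - exists (mkposreal d Hd). intros y Hy. apply He. exact Hy.
  - apply is_derive_Reals; auto.
Qed.

Lemma Derive_of_lim (f : R -> R) t l : derivable_pt_lim f t l -> Derive (fun x => f x) t = l.
Proof. intros H. apply is_derive_unique, is_derive_Reals, H. Qed.

Lemma ex_derive_of_lim (f : R -> R) t l : derivable_pt_lim f t l -> ex_derive (fun x => f x) t.
Proof. intros H. exists l. apply is_derive_Reals, H. Qed.

Lemma derivable_pt_lim_half_sq a x : derivable_pt_lim (fun y => a * y^2 / 2) x (a * x).
Proof. apply is_derive_Reals. auto_derive; [exact I|field]. Qed.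

Lemma MVT_tagging (h dh : R -> R) a b :
  (forall x, a <= x <= b -> continuity_pt h x) ->
  (forall x, a < x < b -> derivable_pt_lim h x (dh x)) ->
  exists tag : R -> R -> R,
    (forall x y, x <= y -> x <= tag x y <= y) /\
    (forall x y, a <= x -> x < y -> y <= b ->
       x < tag x y < y /\ h y - h x = dh (tag x y) * (y - x)).
Proof.
  intros Hc Hd.
  set (P := fun x y c => x <= y -> x <= c <= y /\
     (a <= x -> x < y -> y <= b -> x < c < y /\ h y - h x = dh c * (y - x))).
  assert (Ex : forall x y, exists c, P x y c).
  { intros x y. destruct (Rle_dec x y) as [Hxy|Hxy].
    - destruct (Rle_lt_or_eq_dec x y Hxy) as [Hlt|Heq].
      + destruct (Rle_dec a x) as [Hax|Hax]; [destruct (Rle_dec y b) as [Hyb|Hyb]|].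
        * destruct (MVT_interior h dh x y Hlt) as [c [Hc1 Hc2]].
          { intros; apply Hc; lra. } { intros; apply Hd; lra. }
          exists c; intros _; split; [lra|auto].
        * exists x; intros _; split; [lra|intros; lra].
        * exists x; intros _; split; [lra|intros; lra].
      + exists x; intros _; split; [lra|intros; lra].
    - exists x; intros H; lra. }
  exists (fun x y => epsilon (inhabits 0) (P x y)).
  assert (Htag : forall x y, P x y (epsilon (inhabits 0) (P x y)))
    by (intros x y; apply epsilon_spec, Ex).
  split; intros x y Hxy; [apply (Htag x y Hxy)|].
  intros Hlt Hyb. apply (Htag x y ltac:(lra)); auto.
Qed.

Lemma Riemann_sum_increment_le (F h dh : R -> R) (a b : R) (tag : R -> R -> R) :
  (forall x y, a <= x -> x < y -> y <= b ->
     x < tag x y < y /\ h y - h x = dh (tag x y) * (y - x)) ->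
  (forall c, a < c < b -> dh c <= F c) ->
  forall l x, sorted Rle (x :: l) -> a <= x -> seq.last x l <= b ->
    h (seq.last x l) - h x <= Riemann_sum F (SF_seq_f2 tag (x :: l)).
Proof.
  intros Ht HF l. induction l as [|y l IH]; intros x Hs Hax Hb.
  - unfold Riemann_sum. simpl. unfold zero; simpl. lra.
  - rewrite SF_cons_f2 by (simpl; lia).
    rewrite Riemann_sum_cons. simpl seq.head.
    destruct Hs as [Hxy Hs].
    assert (Hyl : y <= seq.last y l).
    { pose proof (sorted_last (y :: l) 0 Hs) as K. simpl in K.
      apply (K ltac:(lia) y). }
    simpl seq.last in Hb.
    specialize (IH y Hs ltac:(lra) Hb). simpl seq.last.
    change (SF_h (SF_seq_f2 tag (y :: l))) with y.
    unfold plus, scal; simpl. unfold mult; simpl.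
    destruct (Rle_lt_or_eq_dec x y Hxy) as [Hlt| <-].
    + destruct (Ht x y Hax Hlt ltac:(lra)) as [[H1 H2] H3].
      assert (dh (tag x y) <= F (tag x y)) by (apply HF; lra).
      assert ((y - x) * dh (tag x y) <= (y - x) * F (tag x y))
        by (apply Rmult_le_compat_l; lra).
      lra.
    + replace (x - x) with 0 by ring. lra.
Qed.

(** No integrability of [dh] is needed: Riemann sums of [F] tagged at
    mean-value points dominate the telescoping increments of [h]. *)
Lemma increment_le_RInt (F h dh : R -> R) a b I : a < b -> is_RInt F a b I ->
  (forall x, a <= x <= b -> continuity_pt h x) ->
  (forall x, a < x < b -> derivable_pt_lim h x (dh x)) ->
  (forall x, a < x < b -> dh x <= F x) -> h b - h a <= I.
Proof.
  intros Hab HI Hc Hd HF.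
  destruct (MVT_tagging h dh a b Hc Hd) as [tag [HT2 HT]].
  apply Rnot_lt_le; intros Hlt.
  set (eps := h b - h a - I).
  assert (Heps : 0 < eps) by (unfold eps; lra).
  destruct (HI _ (locally_ball I (mkposreal eps Heps))) as [d Hd'].
  destruct (nfloor_ex ((b - a) / d)) as [n [Hn1 Hn2]].
  { apply Rdiv_le_0_compat; [lra|apply cond_pos]. }
  assert (Hdpos := cond_pos d).
  destruct (Riemann_fine_unif_part tag a b n HT2 ltac:(lra)) as [S1 [S2 [S3 S4]]].
  assert (Hstep : seq_step (SF_lx (SF_seq_f2 tag (unif_part a b n))) < d).
  { eapply Rle_lt_trans; [apply S1|].
    assert (0 <= INR n) by apply pos_INR.
    apply (Rmult_lt_reg_r (INR n + 1)); [lra|].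
    unfold Rdiv. rewrite Rmult_assoc, Rinv_l, Rmult_1_r by lra.
    apply (Rmult_lt_reg_r (/ d)); [apply Rinv_0_lt_compat; auto|].
    replace (d * (INR n + 1) * / d) with (INR n + 1) by (field; lra). exact Hn2. }
  specialize (Hd' _ Hstep).
  rewrite Rmin_left, Rmax_right in Hd' by lra.
  specialize (Hd' (conj S2 (conj S3 S4))).
  rewrite sign_eq_1 in Hd' by lra.
  unfold ball in Hd'; simpl in Hd'.
  unfold AbsRing_ball, abs, minus, plus, opp, scal in Hd'; simpl in Hd'.
  unfold mult in Hd'; simpl in Hd'. rewrite Rmult_1_l in Hd'.
  change (Rabs (Riemann_sum F (SF_seq_f2 tag (unif_part a b n)) - I) < eps) in Hd'.
  assert (Hs : sorted Rle (unif_part a b n)) by (apply unif_part_sort; lra).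
  destruct (unif_part a b n) as [|x l] eqn:El; [simpl in S3, S4; lra|].
  pose proof (Riemann_sum_increment_le F h dh a b tag HT HF l x Hs) as K.
  simpl in S3. subst x.
  change (seq.last (SF_h (SF_seq_f2 tag (a :: l))) (SF_lx (SF_seq_f2 tag (a :: l))) = b) in S4.
  rewrite SF_lx_f2 in S4 by (simpl; lia). simpl in S4.
  rewrite S4 in K. specialize (K ltac:(lra) ltac:(lra)).
  apply Rabs_def2 in Hd'. unfold eps in *. lra.
Qed.

Lemma RInt_le_increment (F h dh : R -> R) a b I : a < b -> is_RInt F a b I ->
  (forall x, a <= x <= b -> continuity_pt h x) ->
  (forall x, a < x < b -> derivable_pt_lim h x (dh x)) ->
  (forall x, a < x < b -> F x <= dh x) -> I <= h b - h a.
Proof.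
  intros Hab HI Hc Hd HF.
  assert (HI' : is_RInt (fun x => - F x) a b (- I)) by (apply (@is_RInt_opp R_NormedModule), HI).
  enough (- h b - - h a <= - I) by lra.
  apply (increment_le_RInt (fun x => - F x) (fun x => - h x) (fun x => - dh x) a b (- I) Hab HI').
  - intros x Hx. apply (continuity_pt_opp h). auto.
  - intros x Hx. apply (derivable_pt_lim_opp h). auto.
  - intros x Hx. specialize (HF x Hx). lra.
Qed.

Lemma RInt_correct_R (f : R -> R) a b : ex_RInt f a b -> is_RInt f a b (RInt f a b).
Proof. apply (@RInt_correct R_CompleteNormedModule). Qed.

Lemma ex_RInt_continuous_R (f : R -> R) a b :
  (forall z, Rmin a b <= z <= Rmax a b -> continuity_pt f z) -> ex_RInt f a b.
Proof.
  intros H. apply (@ex_RInt_continuous R_CompleteNormedModule).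
  intros z Hz. apply continuity_pt_filterlim, H, Hz.
Qed.

Lemma RInt_Chasles_R (f : R -> R) a b c : ex_RInt f a b -> ex_RInt f b c ->
  RInt f a b + RInt f b c = RInt f a c.
Proof. apply (@RInt_Chasles R_CompleteNormedModule). Qed.

Lemma RInt_plus_R (f g : R -> R) a b : ex_RInt f a b -> ex_RInt g a b ->
  RInt (fun x => f x + g x) a b = RInt f a b + RInt g a b.
Proof. apply (@RInt_plus R_CompleteNormedModule). Qed.

Lemma ex_RInt_plus_R (f g : R -> R) a b : ex_RInt f a b -> ex_RInt g a b ->
  ex_RInt (fun x => f x + g x) a b.
Proof. apply (@ex_RInt_plus R_NormedModule). Qed.

Lemma RInt_point_R (f : R -> R) a : RInt f a a = 0.
Proof. apply (@RInt_point R_CompleteNormedModule). Qed.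

Lemma ex_RInt_Chasles_1_R (f : R -> R) a b c : a <= b <= c -> ex_RInt f a c -> ex_RInt f a b.
Proof. apply (@ex_RInt_Chasles_1 R_CompleteNormedModule). Qed.

Lemma ex_RInt_Chasles_2_R (f : R -> R) a b c : a <= b <= c -> ex_RInt f a c -> ex_RInt f b c.
Proof. apply (@ex_RInt_Chasles_2 R_CompleteNormedModule). Qed.

Lemma ex_RInt_bounded (f : R -> R) a b : a <= b -> ex_RInt f a b ->
  exists B, 0 <= B /\ forall t, a <= t <= b -> Rabs (f t) <= B.
Proof.
  intros Hab H. destruct (@ex_RInt_ub R_NormedModule f a b H) as [B HB].
  exists (Rmax 0 B). split; [apply Rmax_l|]. intros t Ht.
  eapply Rle_trans; [|apply Rmax_r]. apply HB. rewrite Rmin_left, Rmax_right; lra.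
Qed.

Lemma continuity_pt_scal_inv c x : 0 < x -> continuity_pt (fun t => c / t) x.
Proof.
  intros Hx. apply (continuity_pt_div (fct_cte c) id).
  - apply continuity_pt_const. intros ? ?. reflexivity.
  - apply derivable_continuous_pt, derivable_pt_id.
  - unfold id; lra.
Qed.

Lemma RInt_scal_inv a b c : 0 < a -> a <= b -> RInt (fun t => c / t) a b = c * (ln b - ln a).
Proof.
  intros Ha Hab. apply (@is_RInt_unique R_CompleteNormedModule).
  replace (c * (ln b - ln a)) with (minus (c * ln b) (c * ln a))
    by (unfold minus, plus, opp; simpl; ring).
  apply (@is_RInt_derive R_CompleteNormedModule (fun t => c * ln t)).
  - intros x Hx. rewrite Rmin_left, Rmax_right in Hx by lra. apply is_derive_Reals.
    replace (c / x) with (c * / x) by (unfold Rdiv; ring).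
    apply (derivable_pt_lim_scal ln), derivable_pt_lim_ln; lra.
  - intros x Hx. rewrite Rmin_left, Rmax_right in Hx by lra.
    apply continuity_pt_filterlim, continuity_pt_scal_inv; lra.
Qed.

Lemma RInt_ge_const_mul (f : R -> R) a b L : a <= b -> ex_RInt f a b ->
  (forall x, a < x < b -> L <= f x) -> (b - a) * L <= RInt f a b.
Proof.
  intros Hab Hf HL.
  replace ((b - a) * L) with (RInt (fun _ => L) a b) by (rewrite RInt_const; reflexivity).
  apply RInt_le; auto. apply ex_RInt_const.
Qed.

(** * Improper integrals on (0,1] *)

Lemma imp_int01_RInt f l : imp_int01 f l ->
  (forall e, 0 < e <= 1 -> ex_RInt f e 1) /\
  (forall eta, 0 < eta -> exists d, 0 < d /\
     forall e, 0 < e < d -> e <= 1 -> Rabs (RInt f e 1 - l) < eta).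
Proof.
  intros [H1 H2]. split.
  - intros e He. destruct (H1 e He) as [I [pr _]]. apply ex_RInt_Reals_1, pr.
  - intros eta Heta. destruct (H2 eta Heta) as [d [Hd H]]. exists d; split; auto.
    intros e He He1. destruct (H1 e (conj (proj1 He) He1)) as [I [pr HI]].
    rewrite (RInt_Reals f e 1 pr). apply (H e (RiemannInt pr)); auto. exists pr; auto.
Qed.

Lemma imp_int01_continuous (G Gc : R -> R) : (forall t, continuity_pt Gc t) ->
  (forall t, 0 < t < 1 -> G t = Gc t) -> imp_int01 G (RInt Gc 0 1).
Proof.
  intros Hc He.
  assert (exGc : forall x y, ex_RInt Gc x y)
    by (intros; apply ex_RInt_continuous_R; intros; apply Hc).
  assert (exG : forall e, 0 <= e <= 1 -> ex_RInt G e 1).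
  { intros e H. apply (ex_RInt_ext Gc); auto.
    intros x Hx. rewrite Rmin_left, Rmax_right in Hx by lra. symmetry; apply He; lra. }
  assert (Eq : forall e, 0 <= e <= 1 -> RInt G e 1 = RInt Gc e 1).
  { intros e H. apply RInt_ext. intros x Hx. rewrite Rmin_left, Rmax_right in Hx by lra.
    apply He; lra. }
  split.
  - intros e He'. exists (RInt G e 1). exists (ex_RInt_Reals_0 _ _ _ (exG e ltac:(lra))).
    symmetry; apply RInt_Reals.
  - intros eps Heps. destruct (ex_RInt_bounded Gc 0 1 ltac:(lra) (exGc 0 1)) as [B [HB0 HB]].
    exists (eps / (B + 1)). split; [apply Rdiv_lt_0_compat; lra|].
    intros e I Hee He1 [pr Hpr]. rewrite <- Hpr, <- RInt_Reals, Eq by lra.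
    rewrite <- (RInt_Chasles_R Gc 0 e 1) by auto.
    rewrite Rabs_minus_sym, Rplus_minus_r.
    eapply Rle_lt_trans.
    { apply (abs_RInt_le_const Gc 0 e B); [lra|auto|]. intros; apply HB; lra. }
    apply Rle_lt_trans with (eps / (B + 1) * B); [apply Rmult_le_compat_r; lra|].
    apply (Rmult_lt_reg_r (B + 1)); [lra|].
    replace (eps / (B + 1) * B * (B + 1)) with (eps * B) by (field; lra). nra.
Qed.

(** If [int_0^1 g^2/t] converges then [g] gets arbitrarily small near [0]:
    otherwise the integral would exceed a multiple of [ln (1/e)]. *)
Lemma imp_int01_sqr_div_small (g : R -> R) C :
  imp_int01 (fun t => g t ^ 2 / t) C ->
  forall eta d, 0 < eta -> 0 < d -> exists e, 0 < e < d /\ e < 1 /\ g e ^ 2 < eta.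
Proof.
  intros HC eta d Heta Hd.
  destruct (imp_int01_RInt _ _ HC) as [exC limC].
  set (fC := fun t => g t ^ 2 / t) in *.
  apply NNPP. intros H.
  assert (H' : forall e, 0 < e < d -> e < 1 -> eta <= g e ^ 2).
  { intros e He He1. apply Rnot_lt_le. intro K. apply H. exists e; auto. }
  destruct (limC 1 ltac:(lra)) as [dC [HdC HlC]].
  set (d' := Rmin (Rmin d dC) 1 / 2).
  assert (Hd' : 0 < d' /\ d' < d /\ d' < dC /\ d' < 1).
  { assert (0 < Rmin (Rmin d dC) 1) by (repeat apply Rmin_pos; lra).
    pose proof (Rmin_l (Rmin d dC) 1). pose proof (Rmin_r (Rmin d dC) 1).
    pose proof (Rmin_l d dC). pose proof (Rmin_r d dC). unfold d'. lra. }
  clearbody d'.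
  set (K := (Rabs C + 2) / eta).
  assert (HK : 0 < K) by (unfold K; apply Rdiv_lt_0_compat; [pose proof (Rabs_pos C)|]; lra).
  set (e := d' * exp (- K)).
  assert (He : 0 < e < d').
  { assert (0 < exp (- K) < 1)
      by (split; [apply exp_pos|rewrite <- exp_0; apply exp_increasing; lra]).
    unfold e. split; nra. }
  assert (Hln : ln d' - ln e = K).
  { unfold e. rewrite ln_mult, ln_exp by (try apply exp_pos; lra). ring. }
  clearbody e.
  assert (ex1 : ex_RInt fC e d') by (apply ex_RInt_Chasles_1_R with 1; [lra|apply exC; lra]).
  assert (ex2 : ex_RInt fC d' 1) by (apply ex_RInt_Chasles_2_R with e; [lra|apply exC; lra]).
  assert (I1 : eta * K <= RInt fC e d').
  { rewrite <- Hln, <- RInt_scal_inv by lra. apply RInt_le; [lra| |auto|].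
    - apply ex_RInt_continuous_R. intros z Hz. rewrite Rmin_left, Rmax_right in Hz by lra.
      apply continuity_pt_scal_inv; lra.
    - intros x Hx. unfold fC, Rdiv. apply Rmult_le_compat_r.
      + left; apply Rinv_0_lt_compat; lra.
      + apply H'; lra. }
  assert (I2 : 0 <= RInt fC d' 1).
  { apply RInt_ge_0; [lra|auto|].
    intros x Hx. unfold fC. apply Rdiv_le_0_compat; [apply pow2_ge_0|lra]. }
  assert (K2 := HlC e ltac:(lra) ltac:(lra)).
  rewrite <- (RInt_Chasles_R fC e d' 1) in K2 by auto. apply Rabs_def2 in K2.
  assert (eta * K = Rabs C + 2) by (unfold K; field; lra).
  pose proof (Rle_abs C). lra.
Qed.

Lemma continuity_pt_sqr_ge_quarter (g : R -> R) t0 : continuity_pt g t0 -> g t0 <> 0 ->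
  exists r, 0 < r /\ forall t, Rabs (t - t0) < r -> g t0 ^ 2 / 4 <= g t ^ 2.
Proof.
  intros Hc Hnz.
  assert (Hap : 0 < Rabs (g t0)) by (apply Rabs_pos_lt; auto).
  destruct (Hc (Rabs (g t0) / 2) ltac:(lra)) as [r [Hr Hcl]].
  exists r. split; [lra|]. intros t Ht.
  assert (Habs : Rabs (g t0) / 2 <= Rabs (g t)).
  { destruct (Req_dec t t0) as [->|Hne]; [lra|].
    assert (K : Rabs (g t - g t0) < Rabs (g t0) / 2)
      by (apply (Hcl t); split; [split; [exact I|auto]|exact Ht]).
    pose proof (Rabs_triang_inv (g t0) (g t)).
    rewrite Rabs_minus_sym in K. lra. }
  rewrite <- (pow2_abs (g t0)), <- (pow2_abs (g t)).
  replace (Rabs (g t0) ^ 2 / 4) with ((Rabs (g t0) / 2) ^ 2) by field.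
  apply pow_incr. lra.
Qed.

Lemma imp_int01_sqr_div_pos (g : R -> R) C t0 :
  imp_int01 (fun t => g t ^ 2 / t) C -> 0 < t0 < 1 -> continuity_pt g t0 -> g t0 <> 0 ->
  0 < C.
Proof.
  intros HC Ht0 Hc Hnz.
  destruct (imp_int01_RInt _ _ HC) as [exC limC].
  set (fC := fun t => g t ^ 2 / t) in *.
  destruct (continuity_pt_sqr_ge_quarter g t0 Hc Hnz) as [r0 [Hr0 Hlow0]].
  set (r := Rmin (r0 / 2) ((1 - t0) / 2)).
  assert (Hr : 0 < r) by (unfold r; apply Rmin_pos; lra).
  assert (r <= r0 / 2) by apply Rmin_l. assert (r <= (1 - t0) / 2) by apply Rmin_r.
  set (beta := g t0 ^ 2 / 4).
  assert (Hbeta : 0 < beta).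
  { unfold beta. rewrite <- pow2_abs.
    assert (0 < Rabs (g t0) ^ 2) by (apply pow_lt, Rabs_pos_lt; auto). lra. }
  assert (Hlow : forall t, t0 <= t <= t0 + r -> beta <= fC t).
  { intros t Ht. assert (Hb := Hlow0 t ltac:(rewrite Rabs_right; lra)).
    unfold fC, Rdiv. apply Rle_trans with (g t ^ 2); [auto|].
    rewrite <- (Rmult_1_r (g t ^ 2)) at 1.
    apply Rmult_le_compat_l; [apply pow2_ge_0|].
    rewrite <- Rinv_1. apply Rinv_le_contravar; lra. }
  destruct (limC (r * beta / 2)) as [dC [HdC HlC]].
  { apply Rdiv_lt_0_compat; [apply Rmult_lt_0_compat|]; lra. }
  set (e := Rmin (dC / 2) (t0 / 2)).
  assert (He0 : 0 < e) by (unfold e; apply Rmin_pos; lra).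
  assert (e <= dC / 2) by apply Rmin_l. assert (e <= t0 / 2) by apply Rmin_r.
  assert (exe : ex_RInt fC e 1) by (apply exC; lra).
  assert (exa : ex_RInt fC e t0) by (apply ex_RInt_Chasles_1_R with 1; [lra|auto]).
  assert (exb : ex_RInt fC t0 1) by (apply ex_RInt_Chasles_2_R with e; [lra|auto]).
  assert (exb1 : ex_RInt fC t0 (t0 + r)) by (apply ex_RInt_Chasles_1_R with 1; [lra|auto]).
  assert (exb2 : ex_RInt fC (t0 + r) 1) by (apply ex_RInt_Chasles_2_R with t0; [lra|auto]).
  assert (Hnn : forall x, 0 < x -> 0 <= fC x)
    by (intros; unfold fC; apply Rdiv_le_0_compat; [apply pow2_ge_0|lra]).
  assert (I1 : 0 <= RInt fC e t0) by (apply RInt_ge_0; [lra|auto|intros; apply Hnn; lra]).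
  assert (I3 : 0 <= RInt fC (t0 + r) 1) by (apply RInt_ge_0; [lra|auto|intros; apply Hnn; lra]).
  assert (I2 : (t0 + r - t0) * beta <= RInt fC t0 (t0 + r))
    by (apply RInt_ge_const_mul; auto; [lra|intros; apply Hlow; lra]).
  assert (K := HlC e ltac:(lra) ltac:(lra)).
  rewrite <- (RInt_Chasles_R fC e t0 1), <- (RInt_Chasles_R fC t0 (t0 + r) 1) in K by auto.
  apply Rabs_def2 in K.
  assert (0 < r * beta) by (apply Rmult_lt_0_compat; lra). lra.
Qed.

(** * Elementary estimates and the nonlinearity *)

Lemma ln_ge_1_minus_inv y : 0 < y -> 1 - / y <= ln y.
Proof.
  intros Hy. assert (H : 1 + ln (/ y) <= exp (ln (/ y))).
  { destruct (Req_dec (ln (/ y)) 0) as [E|E].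
    - rewrite E, exp_0. lra.
    - left; apply exp_ineq1; auto. }
  rewrite exp_ln in H by (apply Rinv_0_lt_compat; auto).
  rewrite ln_Rinv in H by auto. lra.
Qed.

Lemma exp_neg_third_ge_half : / 2 <= exp (- / 3).
Proof.
  assert (E : exp 1 = exp (/3) * exp (/3) * exp (/3)) by (rewrite <- !exp_plus; f_equal; field).
  assert (H3 := exp_le_3).
  assert (exp (/3) <= 2).
  { apply Rnot_lt_le. intros K. assert (0 < exp (/3)) by apply exp_pos.
    assert (4 < exp (/3) * exp (/3)) by nra. nra. }
  rewrite exp_Ropp. apply Rinv_le_contravar; [apply exp_pos|auto].
Qed.

Lemma Rpower_one_minus_div_ge_half p x : 1 < p -> 0 < x <= / 4 -> / 2 <= Rpower (1 - x / p) p.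
Proof.
  intros Hp Hx. unfold Rpower.
  assert (Hxp : x / p < 1).
  { apply (Rmult_lt_reg_r p); [lra|]. unfold Rdiv.
    rewrite Rmult_assoc, Rinv_l, Rmult_1_r by lra. lra. }
  assert (H1 := ln_ge_1_minus_inv (1 - x / p) ltac:(lra)).
  eapply Rle_trans; [apply exp_neg_third_ge_half|]. left.
  apply exp_increasing.
  replace (1 - / (1 - x / p)) with (- x / (p - x)) in H1 by (field; split; lra).
  assert (p * (- x / (p - x)) > - / 3).
  { replace (p * (- x / (p - x))) with (- (x * p / (p - x))) by (field; lra).
    apply Ropp_lt_contravar. apply (Rmult_lt_reg_r (p - x)); [lra|].
    unfold Rdiv. rewrite Rmult_assoc, Rinv_l, Rmult_1_r by lra. nra. }
  apply Rlt_le_trans with (p * (- x / (p - x))); [lra|].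
  apply Rmult_le_compat_l; lra.
Qed.

Definition absp (p x : R) := powp (Rabs x) (p - 1).
Definition fp (p x : R) := absp p x * x.

Lemma absp_pos p x : 0 < x -> absp p x = Rpower x (p - 1).
Proof.
  intros Hx. unfold absp, powp. rewrite Rabs_right by lra.
  destruct (Rle_dec x 0); [lra|reflexivity].
Qed.

Lemma absp_0 p : absp p 0 = 0.
Proof. unfold absp, powp. rewrite Rabs_R0. destruct (Rle_dec 0 0); [reflexivity|lra]. Qed.

Lemma absp_ge0 p x : 0 <= absp p x.
Proof.
  unfold absp, powp. destruct (Rle_dec (Rabs x) 0); [lra|].
  unfold Rpower. left; apply exp_pos.
Qed.

Lemma fp_pos p x : 0 < x -> fp p x = Rpower x p.
Proof.
  intros Hx. unfold fp. rewrite absp_pos by auto.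
  rewrite <- (Rpower_1 x) at 2 by auto. rewrite <- Rpower_plus. f_equal; ring.
Qed.

Lemma fp_0 p : fp p 0 = 0.
Proof. unfold fp. ring. Qed.

Lemma fp_ge0 p x : 0 <= x -> 0 <= fp p x.
Proof. intros. unfold fp. apply Rmult_le_pos; auto. apply absp_ge0. Qed.

Lemma fp_le p x y : 1 < p -> 0 <= x <= y -> fp p x <= fp p y.
Proof.
  intros Hp [H1 H2]. destruct (Rle_lt_or_eq_dec 0 x H1) as [Hlt| <-].
  - rewrite !fp_pos by lra. apply Rle_Rpower_l; lra.
  - rewrite fp_0. apply fp_ge0; lra.
Qed.

Lemma derivable_pt_lim_fp p x : 0 < x -> derivable_pt_lim (fp p) x (p * absp p x).
Proof.
  intros Hx. apply derivable_pt_lim_loc with (f := fun y => Rpower y p) (d := x); auto.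
  - intros y Hy. apply Rabs_def2 in Hy. rewrite fp_pos; auto. lra.
  - rewrite absp_pos by auto. apply derivable_pt_lim_power; auto.
Qed.

Lemma continuity_pt_absp p x : 1 < p -> 0 <= x -> continuity_pt (absp p) x.
Proof.
  intros Hp Hx. destruct (Rle_lt_or_eq_dec 0 x Hx) as [Hlt| <-].
  - apply derivable_continuous_pt. exists ((p - 1) * Rpower x (p - 1 - 1)).
    apply derivable_pt_lim_loc with (f := fun y => Rpower y (p - 1)) (d := x); auto.
    + intros y Hy. apply Rabs_def2 in Hy. rewrite absp_pos; auto. lra.
    + apply derivable_pt_lim_power; auto.
  - intros eps Heps. exists (Rpower eps (/ (p - 1))). split.
    { unfold Rpower; apply Rlt_gt, exp_pos. }
    intros y [_ Hy]. simpl in *. unfold R_dist in *. rewrite Rminus_0_r in Hy.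
    rewrite absp_0, Rminus_0_r, Rabs_right by (apply Rle_ge, absp_ge0).
    unfold absp, powp. destruct (Rle_dec (Rabs y) 0) as [H0|H0]; [lra|].
    apply Rnot_le_lt in H0.
    apply Rlt_le_trans with (Rpower (Rpower eps (/ (p - 1))) (p - 1)).
    + apply Rlt_Rpower_l; lra.
    + rewrite Rpower_mult. replace (/ (p - 1) * (p - 1)) with 1 by (field; lra).
      rewrite Rpower_1; lra.
Qed.

Lemma continuity_pt_fp p x : 1 < p -> 0 <= x -> continuity_pt (fp p) x.
Proof.
  intros Hp Hx. apply (continuity_pt_mult (absp p) (fun y => y)).
  - apply continuity_pt_absp; auto.
  - apply derivable_continuous_pt, derivable_pt_id.
Qed.

Lemma picone_ineq t x y k w : 0 < t ->
  k * (2 * x * y) + ((1 - k^2) / t - t * w) * x^2 <= t * (y^2 - w * x^2) + x^2 / t.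
Proof.
  intros Ht.
  assert (0 <= (t * y - k * x)^2 / t) by (apply Rdiv_le_0_compat; [apply pow2_ge_0|lra]).
  assert (t * (y^2 - w * x^2) + x^2 / t - (k * (2 * x * y) + ((1 - k^2) / t - t * w) * x^2)
          = (t * y - k * x)^2 / t) by (field; lra).
  lra.
Qed.

(** * The positive solution *)

Section LaneEmden.

Variables (p : R) (v dv : R -> R).
Hypothesis Hp : 1 < p.
Hypothesis Hpos : forall t, 0 <= t < 1 -> 0 < v t.
Hypothesis Hv1 : v 1 = 0.
Hypothesis Hlc : left_cont_at1 v.
Hypothesis Hd0 : derivable_pt_lim v 0 0.
Hypothesis Hdv : forall t, 0 < t < 1 -> derivable_pt_lim v t (dv t).
Hypothesis Hdd : forall t, 0 < t < 1 ->
  derivable_pt_lim (fun s => s * dv s) t (- (t * (powp (Rabs (v t)) (p - 1) * v t))).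

Definition clamp01 (t : R) := Rmax 0 (Rmin t 1).

(** [v] continued constantly outside [[0,1]], so that [fv] is continuous on [R]. *)
Definition vext (t : R) := v (clamp01 t).

Definition fv (t : R) := fp p (vext t).
Definition mass (t : R) : R := RInt (fun s => s * fv s) 0 t.
Definition vmax := v 0.
Definition f0 := fv 0.

Lemma clamp01_in t : 0 <= clamp01 t <= 1.
Proof. unfold clamp01, Rmax, Rmin. repeat destruct Rle_dec; lra. Qed.

Lemma clamp01_id t : 0 <= t <= 1 -> clamp01 t = t.
Proof. intros. unfold clamp01, Rmax, Rmin. repeat destruct Rle_dec; lra. Qed.

Lemma clamp01_lip s t : Rabs (clamp01 s - clamp01 t) <= Rabs (s - t).
Proof.
  unfold clamp01, Rmax, Rmin. repeat destruct Rle_dec;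
  unfold Rabs; repeat destruct Rcase_abs; lra.
Qed.

Lemma v_ge0 t : 0 <= t <= 1 -> 0 <= v t.
Proof.
  intros H. destruct (Req_dec t 1) as [->|Hn]; [rewrite Hv1; lra|].
  left; apply Hpos; lra.
Qed.

Lemma vmax_pos : 0 < vmax.
Proof. apply Hpos; lra. Qed.

Lemma v_continuous01 y : 0 <= y <= 1 -> forall eps, 0 < eps -> exists d, 0 < d /\
  forall z, 0 <= z <= 1 -> Rabs (z - y) < d -> Rabs (v z - v y) < eps.
Proof.
  intros Hy eps Heps. destruct (Req_dec y 1) as [->|Hn].
  - destruct (Hlc eps Heps) as [d [Hd H]]. exists d; split; auto.
    intros z Hz Hzd. apply H. apply Rabs_def2 in Hzd. lra.
  - assert (Hc : continuity_pt v y).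
    { apply derivable_continuous_pt. destruct (Req_EM_T y 0) as [->|H0].
      - exists 0; auto.
      - exists (dv y); apply Hdv; lra. }
    destruct (Hc eps Heps) as [d [Hd H]]. exists d; split; auto.
    intros z Hz Hzd. destruct (Req_dec z y) as [->|Hzy].
    + rewrite Rminus_diag, Rabs_R0; auto.
    + apply (H z). split; [split; [exact I|auto]|exact Hzd].
Qed.

Lemma vext_id t : 0 <= t <= 1 -> vext t = v t.
Proof. intros; unfold vext; rewrite clamp01_id; auto. Qed.

Lemma vext_ge0 t : 0 <= vext t.
Proof. apply v_ge0, clamp01_in. Qed.

Lemma continuity_pt_vext t : continuity_pt vext t.
Proof.
  intros eps Heps.
  destruct (v_continuous01 (clamp01 t) (clamp01_in t) eps Heps) as [d [Hd H]].
  exists d; split; [lra|]. intros x [_ Hx]. simpl in *. unfold R_dist in *.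
  apply H; [apply clamp01_in|]. eapply Rle_lt_trans; [apply clamp01_lip|auto].
Qed.

Lemma derivable_pt_lim_vext t : 0 < t < 1 -> derivable_pt_lim vext t (dv t).
Proof.
  intros Ht. apply derivable_pt_lim_loc with (f := v) (d := Rmin t (1 - t)).
  - apply Rmin_pos; lra.
  - intros y Hy. apply Rabs_def2 in Hy.
    pose proof (Rmin_l t (1 - t)). pose proof (Rmin_r t (1 - t)).
    rewrite vext_id; lra.
  - apply Hdv; auto.
Qed.

Lemma fv_eq t : 0 <= t <= 1 -> fv t = fp p (v t).
Proof. intros; unfold fv; rewrite vext_id; auto. Qed.

Lemma fv_ge0 t : 0 <= fv t.
Proof. apply fp_ge0, vext_ge0. Qed.

Lemma fv_pos t : 0 <= t < 1 -> 0 < fv t.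
Proof.
  intros. rewrite fv_eq, fp_pos by (try apply Hpos; lra).
  unfold Rpower; apply exp_pos.
Qed.

Lemma fv_1 : fv 1 = 0.
Proof. rewrite fv_eq, Hv1 by lra. apply fp_0. Qed.

Lemma continuity_pt_fv t : continuity_pt fv t.
Proof.
  apply (continuity_pt_comp vext (fp p)).
  - apply continuity_pt_vext.
  - apply continuity_pt_fp; auto. apply vext_ge0.
Qed.

Lemma derivable_pt_lim_fv t : 0 < t < 1 -> derivable_pt_lim fv t (p * absp p (v t) * dv t).
Proof.
  intros Ht. unfold fv.
  replace (p * absp p (v t) * dv t) with (p * absp p (vext t) * dv t)
    by (rewrite vext_id; auto; lra).
  apply (derivable_pt_lim_comp vext (fp p)).
  - apply derivable_pt_lim_vext; auto.
  - apply derivable_pt_lim_fp. rewrite vext_id by lra. apply Hpos; lra.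
Qed.

Lemma continuity_pt_mass_integrand t : continuity_pt (fun s => s * fv s) t.
Proof.
  apply (continuity_pt_mult (fun s => s) fv).
  - apply derivable_continuous_pt, derivable_pt_id.
  - apply continuity_pt_fv.
Qed.

Lemma derivable_pt_lim_mass t : derivable_pt_lim mass t (t * fv t).
Proof.
  apply is_derive_Reals.
  apply (@is_derive_RInt R_CompleteNormedModule (fun s => s * fv s) mass 0 t).
  - apply filter_forall. intros b. apply RInt_correct_R.
    apply ex_RInt_continuous_R. intros; apply continuity_pt_mass_integrand.
  - apply continuity_pt_filterlim, continuity_pt_mass_integrand.
Qed.

Lemma continuity_pt_mass t : continuity_pt mass t.
Proof. apply derivable_continuous_pt. exists (t * fv t). apply derivable_pt_lim_mass. Qed.

Lemma mass_0 : mass 0 = 0.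
Proof. apply RInt_point_R. Qed.

Lemma mass_pos t : 0 < t <= 1 -> 0 < mass t.
Proof.
  intros Ht.
  destruct (MVT_interior mass (fun s => s * fv s) 0 t ltac:(lra)) as [c [Hc E]].
  { intros; apply continuity_pt_mass. }
  { intros; apply derivable_pt_lim_mass. }
  rewrite mass_0 in E. assert (0 < c * fv c * (t - 0)); [|lra].
  apply Rmult_lt_0_compat; [apply Rmult_lt_0_compat; [lra|apply fv_pos; lra]|lra].
Qed.

Lemma mass_le s t : 0 <= s <= t -> mass s <= mass t.
Proof.
  intros H. apply (le_of_derive_ge0 mass (fun x => x * fv x)); try lra.
  - intros; apply continuity_pt_mass.
  - intros; apply derivable_pt_lim_mass.
  - intros c Hc. apply Rmult_le_pos; [lra|apply fv_ge0].
Qed.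

Lemma flux_const s t : 0 < s < 1 -> 0 < t < 1 -> s * dv s + mass s = t * dv t + mass t.
Proof.
  intros Hs Ht.
  assert (Hd : forall x, 0 < x < 1 -> derivable_pt_lim (fun y => y * dv y + mass y) x 0).
  { intros x Hx. replace 0 with (- (x * (powp (Rabs (v x)) (p - 1) * v x)) + x * fv x).
    - apply (derivable_pt_lim_plus (fun y => y * dv y) mass x).
      + apply Hdd; auto.
      + apply derivable_pt_lim_mass.
    - rewrite fv_eq by lra. unfold fp, absp. ring. }
  assert (Hc : forall x, 0 < x < 1 -> continuity_pt (fun y => y * dv y + mass y) x).
  { intros x Hx. apply derivable_continuous_pt. exists 0. apply Hd; auto. }
  destruct (Rtotal_order s t) as [Hst|[<-|Hst]]; [|reflexivity|].
  - destruct (MVT_interior (fun y => y * dv y + mass y) (fun _ => 0) s t Hst) as [c [_ Hc2]];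
      [intros; apply Hc; lra|intros; apply Hd; lra|lra].
  - destruct (MVT_interior (fun y => y * dv y + mass y) (fun _ => 0) t s Hst) as [c [_ Hc2]];
      [intros; apply Hc; lra|intros; apply Hd; lra|lra].
Qed.

(** The constant [c = t v'(t) + mass t] vanishes: otherwise [|v'| ~ |c|/t]
    near [0] and [v] would vary by about [|c| ln 2] on every [[s, 2s]],
    against continuity of [v] at [0]. *)
Lemma flux_eq t : 0 < t < 1 -> t * dv t = - mass t.
Proof.
  intros Ht.
  set (c := /2 * dv (/2) + mass (/2)).
  assert (Hc : forall s, 0 < s < 1 -> s * dv s + mass s = c)
    by (intros s Hs; apply flux_const; lra).
  enough (c = 0) by (specialize (Hc t Ht); lra).
  apply NNPP; intros Hne.
  assert (Hac : 0 < Rabs c) by (apply Rabs_pos_lt; auto).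
  destruct (continuity_pt_mass 0 (Rabs c / 2) ltac:(lra)) as [d1 [Hd1 H1]].
  destruct (v_continuous01 0 ltac:(lra) (Rabs c / 8) ltac:(lra)) as [d2 [Hd2 H2]].
  set (s := Rmin (Rmin d1 d2) 1 / 4).
  assert (Hs : 0 < s /\ 2 * s < d1 /\ 2 * s < d2 /\ 2 * s < 1).
  { assert (0 < Rmin (Rmin d1 d2) 1) by (repeat apply Rmin_pos; lra).
    pose proof (Rmin_l (Rmin d1 d2) 1). pose proof (Rmin_r (Rmin d1 d2) 1).
    pose proof (Rmin_l d1 d2). pose proof (Rmin_r d1 d2). unfold s. lra. }
  clearbody s.
  destruct (MVT_interior v dv s (2 * s) ltac:(lra)) as [xi [Hxi E]].
  { intros x Hx. apply derivable_continuous_pt. exists (dv x). apply Hdv; lra. }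
  { intros x Hx. apply Hdv; lra. }
  assert (Hm : Rabs (mass xi) < Rabs c / 2).
  { assert (K := H1 xi). simpl in K. unfold R_dist in K. rewrite mass_0, !Rminus_0_r in K.
    apply K. split; [split; [exact I|lra]|]. rewrite Rabs_right; lra. }
  assert (Ha : Rabs (v (2 * s) - v 0) < Rabs c / 8).
  { apply H2; [lra|]. rewrite Rminus_0_r, Rabs_right; lra. }
  assert (Hb : Rabs (v s - v 0) < Rabs c / 8).
  { apply H2; [lra|]. rewrite Rminus_0_r, Rabs_right; lra. }
  assert (Hd : s * Rabs (dv xi) < Rabs c / 4).
  { replace (s * Rabs (dv xi)) with (Rabs ((v (2 * s) - v 0) - (v s - v 0))).
    - eapply Rle_lt_trans; [apply Rabs_triang|]. rewrite Rabs_Ropp. lra.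
    - replace ((v (2 * s) - v 0) - (v s - v 0)) with (s * dv xi)
        by (replace (s * dv xi) with (dv xi * (2 * s - s)) by ring; rewrite <- E; ring).
      rewrite Rabs_mult, Rabs_right; lra. }
  assert (Hx : Rabs c - Rabs (mass xi) <= xi * Rabs (dv xi)).
  { replace (xi * Rabs (dv xi)) with (Rabs (c - mass xi))
      by (replace (c - mass xi) with (xi * dv xi) by (rewrite <- (Hc xi); lra);
          rewrite Rabs_mult, Rabs_right; lra).
    apply Rabs_triang_inv. }
  assert (xi * Rabs (dv xi) <= 2 * s * Rabs (dv xi))
    by (apply Rmult_le_compat_r; [apply Rabs_pos|lra]).
  lra.
Qed.

Lemma dv_eq t : 0 < t < 1 -> dv t = - mass t / t.
Proof. intros H. pose proof (flux_eq t H). field_simplify_eq; lra. Qed.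

Lemma v_antitone s t : 0 <= s <= t -> t <= 1 -> v t <= v s.
Proof.
  intros H Ht. rewrite <- (vext_id s), <- (vext_id t) by lra.
  enough (- vext s <= - vext t) by lra.
  apply (le_of_derive_ge0 (fun x => - vext x) (fun x => - dv x)); try lra.
  - intros c _. apply (continuity_pt_opp vext), continuity_pt_vext.
  - intros c Hc. apply (derivable_pt_lim_opp vext), derivable_pt_lim_vext; lra.
  - intros c Hc. rewrite dv_eq by lra.
    assert (0 < mass c) by (apply mass_pos; lra).
    unfold Rdiv. rewrite Ropp_mult_distr_l, Ropp_involutive.
    left; apply Rmult_lt_0_compat; [lra|apply Rinv_0_lt_compat; lra].
Qed.

Lemma v_le_vmax t : 0 <= t <= 1 -> v t <= vmax.
Proof. intros. apply v_antitone; lra. Qed.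

Lemma fv_antitone s t : 0 <= s <= t -> t <= 1 -> fv t <= fv s.
Proof.
  intros H Ht. rewrite !fv_eq by lra. apply fp_le; auto.
  split; [apply v_ge0; lra|apply v_antitone; lra].
Qed.

Lemma mass_le_quad_of c t : 0 <= t -> (forall s, 0 < s < t -> fv s <= c) ->
  mass t <= c * t^2 / 2.
Proof.
  intros Ht Hc.
  enough (c * 0^2/2 - mass 0 <= c * t^2/2 - mass t) by (rewrite mass_0 in *; lra).
  assert (D : forall x, derivable_pt_lim (fun y => c * y^2/2 - mass y) x (c * x - x * fv x)).
  { intros x. apply (derivable_pt_lim_minus (fun y => c * y^2/2) mass).
    - apply derivable_pt_lim_half_sq.
    - apply derivable_pt_lim_mass. }
  apply (le_of_derive_ge0 (fun y => c * y^2/2 - mass y) (fun x => c * x - x * fv x) 0 t Ht); [|intros; apply D|].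
  - intros x _. apply derivable_continuous_pt. eexists. apply D.
  - intros x Hx. specialize (Hc x Hx).
    replace (c * x - x * fv x) with (x * (c - fv x)) by ring.
    apply Rmult_le_pos; lra.
Qed.

Lemma mass_ge_quad_of c t : 0 <= t -> (forall s, 0 < s < t -> c <= fv s) ->
  c * t^2 / 2 <= mass t.
Proof.
  intros Ht Hc.
  enough (mass 0 - c * 0^2/2 <= mass t - c * t^2/2) by (rewrite mass_0 in *; lra).
  assert (D : forall x, derivable_pt_lim (fun y => mass y - c * y^2/2) x (x * fv x - c * x)).
  { intros x. apply (derivable_pt_lim_minus mass (fun y => c * y^2/2)).
    - apply derivable_pt_lim_mass.
    - apply derivable_pt_lim_half_sq. }
  apply (le_of_derive_ge0 (fun y => mass y - c * y^2/2) (fun x => x * fv x - c * x) 0 t Ht); [|intros; apply D|].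
  - intros x _. apply derivable_continuous_pt. eexists. apply D.
  - intros x Hx. specialize (Hc x Hx).
    replace (x * fv x - c * x) with (x * (fv x - c)) by ring.
    apply Rmult_le_pos; lra.
Qed.

Lemma mass_le_quad t : 0 <= t <= 1 -> mass t <= f0 * t^2 / 2.
Proof.
  intros Ht. apply mass_le_quad_of; [lra|].
  intros s Hs. apply fv_antitone; lra.
Qed.

Lemma mass_ge_quad t : 0 <= t <= 1 -> fv t * t^2 / 2 <= mass t.
Proof.
  intros Ht. apply mass_ge_quad_of; [lra|].
  intros s Hs. apply fv_antitone; lra.
Qed.

Lemma v_ge_quad t : 0 <= t <= 1 -> vmax - f0 * t^2 / 4 <= v t.
Proof.
  intros Ht. rewrite <- (vext_id t) by lra.
  enough (vext 0 + f0 / 2 * 0^2/2 <= vext t + f0 / 2 * t^2/2) as K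
    by (rewrite vext_id in K by lra; unfold vmax; lra).
  apply (le_of_derive_ge0 (fun x => vext x + f0 / 2 * x^2/2) (fun x => dv x + f0 / 2 * x));
    try lra.
  - intros c _. apply (continuity_pt_plus vext (fun x => f0 / 2 * x^2/2)).
    + apply continuity_pt_vext.
    + apply derivable_continuous_pt. exists (f0 / 2 * c). apply derivable_pt_lim_half_sq.
  - intros c Hc. apply (derivable_pt_lim_plus vext (fun y => f0 / 2 * y^2/2)).
    + apply derivable_pt_lim_vext; lra.
    + apply derivable_pt_lim_half_sq.
  - intros c Hc. rewrite dv_eq by lra. assert (K := mass_le_quad c ltac:(lra)).
    apply (Rmult_le_reg_r c); [lra|]. rewrite Rmult_0_l.
    replace ((- mass c / c + f0 / 2 * c) * c) with (f0 * c^2 / 2 - mass c) by (field; lra).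
    lra.
Qed.

Lemma f0_ge_4vmax : 4 * vmax <= f0.
Proof. pose proof (v_ge_quad 1 ltac:(lra)) as H. rewrite Hv1 in H. lra. Qed.

Lemma f0_pos : 0 < f0.
Proof. pose proof f0_ge_4vmax. pose proof vmax_pos. lra. Qed.

Lemma f0_eq : f0 = Rpower vmax p.
Proof. unfold f0. rewrite fv_eq by lra. apply fp_pos, vmax_pos. Qed.

(** * The lower bound *)

(** [kappa = t w'/w] for [w = -v' = mass t / t]. *)
Definition kappa (t : R) := t^2 * fv t / mass t - 1.

Lemma kappa_bounds t : 0 < t < 1 -> -1 <= kappa t <= 1.
Proof.
  intros Ht. unfold kappa.
  assert (Hm := mass_pos t ltac:(lra)). assert (Hl := mass_ge_quad t ltac:(lra)).
  assert (0 <= t^2 * fv t) by (apply Rmult_le_pos; [apply pow2_ge_0|apply fv_ge0]).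
  assert (E : t^2 * fv t / mass t * mass t = t^2 * fv t) by (field; lra).
  set (x := t^2 * fv t / mass t) in *. split; nra.
Qed.

Lemma derivable_pt_lim_kappa t : 0 < t < 1 ->
  derivable_pt_lim kappa t ((1 - kappa t ^ 2) / t - p * t * absp p (v t)).
Proof.
  intros Ht. assert (Hm := mass_pos t ltac:(lra)).
  assert (H1 : derivable_pt_lim (fun y => y^2 * fv y) t
     (INR 2 * t ^ Init.Nat.pred 2 * fv t + t^2 * (p * absp p (v t) * dv t))).
  { apply (derivable_pt_lim_mult (fun y => y^2) fv).
    - apply derivable_pt_lim_pow.
    - apply derivable_pt_lim_fv; auto. }
  assert (H2 := derivable_pt_lim_div (fun y => y^2 * fv y) mass t _ _ H1
                  (derivable_pt_lim_mass t) ltac:(lra)).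
  assert (H3 := derivable_pt_lim_minus _ (fct_cte 1) t _ _ H2 (derivable_pt_lim_const 1 t)).
  match type of H3 with derivable_pt_lim _ _ ?L =>
    replace ((1 - kappa t ^ 2) / t - p * t * absp p (v t)) with L end; [exact H3|].
  rewrite dv_eq by lra. unfold kappa, Rsqr, fct_cte. simpl. field. split; lra.
Qed.

Definition picone_integrand (phi dphi : R -> R) (t : R) :=
  t * (dphi t ^ 2 - p * absp p (v t) * phi t ^ 2) + phi t ^ 2 / t.

Lemma picone_increment (phi dphi : R -> R) e b (I : R) :
  (forall t, 0 < t < 1 -> derivable_pt_lim phi t (dphi t)) ->
  0 < e < b -> b < 1 -> is_RInt (picone_integrand phi dphi) e b I ->
  - phi b ^ 2 - phi e ^ 2 <= I.
Proof.
  intros Hd He Hb HI.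
  set (h := fun t => kappa t * phi t ^ 2).
  set (dh := fun t => ((1 - kappa t ^ 2) / t - p * t * absp p (v t)) * phi t ^ 2
                       + kappa t * (INR 2 * phi t ^ Init.Nat.pred 2 * dphi t)).
  assert (Hhd : forall t, 0 < t < 1 -> derivable_pt_lim h t (dh t)).
  { intros t Ht. apply (derivable_pt_lim_mult kappa (fun y => phi y ^ 2)).
    - apply derivable_pt_lim_kappa; auto.
    - apply (derivable_pt_lim_comp phi (fun y => y ^ 2)); [apply Hd; auto|].
      apply derivable_pt_lim_pow. }
  assert (Hinc : h b - h e <= I).
  { apply (increment_le_RInt (picone_integrand phi dphi) h dh e b I); [lra|exact HI| |intros; apply Hhd; lra|].
    - intros x Hx. apply derivable_continuous_pt. exists (dh x). apply Hhd; lra.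
    - intros x Hx. unfold dh, picone_integrand. simpl INR.
      replace (phi x ^ Init.Nat.pred 2) with (phi x) by (simpl; ring).
      pose proof (picone_ineq x (phi x) (dphi x) (kappa x) (p * absp p (v x)) ltac:(lra)).
      replace (p * x * absp p (v x)) with (x * (p * absp p (v x))) by ring.
      replace (p * absp p (v x) * phi x ^ 2) with ((p * absp p (v x)) * phi x ^ 2) by ring.
      lra. }
  assert (Hkb := kappa_bounds b ltac:(lra)). assert (Hke := kappa_bounds e ltac:(lra)).
  assert (0 <= phi b ^ 2) by apply pow2_ge_0. assert (0 <= phi e ^ 2) by apply pow2_ge_0.
  unfold h in Hinc. nra.
Qed.

Lemma picone_integral_ge (phi dphi : R -> R) e :
  (forall t, 0 < t < 1 -> derivable_pt_lim phi t (dphi t)) ->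
  left_cont_at1 phi -> phi 1 = 0 -> 0 < e < 1 ->
  ex_RInt (picone_integrand phi dphi) e 1 ->
  - phi e ^ 2 <= RInt (picone_integrand phi dphi) e 1.
Proof.
  intros Hd Hlc1 Hphi1 He exS.
  set (S := picone_integrand phi dphi) in *.
  destruct (ex_RInt_bounded S e 1 ltac:(lra) exS) as [B [HB0 HB]].
  apply le_epsilon. intros eta Heta.
  destruct (Hlc1 (Rmin 1 (eta / 2)) ltac:(apply Rmin_pos; lra)) as [d1 [Hd1 Hl]].
  set (r := Rmin (Rmin d1 (eta / 2 / (B + 1))) (1 - e) / 2).
  assert (0 < eta / 2 / (B + 1)) by (apply Rdiv_lt_0_compat; lra).
  assert (0 < Rmin (Rmin d1 (eta / 2 / (B + 1))) (1 - e)) by (repeat apply Rmin_pos; lra).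
  pose proof (Rmin_l (Rmin d1 (eta / 2 / (B + 1))) (1 - e)).
  pose proof (Rmin_r (Rmin d1 (eta / 2 / (B + 1))) (1 - e)).
  pose proof (Rmin_l d1 (eta / 2 / (B + 1))). pose proof (Rmin_r d1 (eta / 2 / (B + 1))).
  assert (Hr : r * B <= eta / 2).
  { apply Rle_trans with (eta / 2 / (B + 1) / 2 * B); [apply Rmult_le_compat_r; unfold r; lra|].
    apply (Rmult_le_reg_r (B + 1)); [lra|].
    replace (eta / 2 / (B + 1) / 2 * B * (B + 1)) with (eta / 2 * (B / 2)) by (field; lra).
    apply Rmult_le_compat_l; lra. }
  set (b := 1 - r).
  assert (Hb : e < b < 1) by (unfold b, r; lra).
  assert (exS1 : ex_RInt S e b) by (apply ex_RInt_Chasles_1_R with 1; [lra|auto]).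
  assert (exS2 : ex_RInt S b 1) by (apply ex_RInt_Chasles_2_R with e; [lra|auto]).
  rewrite <- (RInt_Chasles_R S e b 1) by auto.
  assert (Htail : - (eta / 2) <= RInt S b 1).
  { assert (K := abs_RInt_le_const S b 1 B ltac:(lra) exS2 ltac:(intros; apply HB; lra)).
    apply Rabs_le_between in K. unfold b in *. lra. }
  assert (Hmain := picone_increment phi dphi e b _ Hd ltac:(lra) ltac:(lra)
                     (RInt_correct_R S e b exS1)).
  assert (Hpb : phi b ^ 2 <= eta / 2).
  { assert (K := Hl b ltac:(unfold b, r; lra)). rewrite Hphi1, Rminus_0_r in K.
    pose proof (Rmin_l 1 (eta / 2)). pose proof (Rmin_r 1 (eta / 2)).
    rewrite <- pow2_abs. pose proof (Rabs_pos (phi b)). simpl. nra. }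
  lra.
Qed.

Lemma rayleigh_ge_neg1 q : rayleigh_set p v q -> -1 <= q.
Proof.
  intros [phi [dphi [A [C [N [Hd [Hc [Hlc1 [Hphi1 [[t0 [Ht0 Hnz]] [_ [HC [HN ->]]]]]]]]]]]]].
  destruct (imp_int01_RInt _ _ HN) as [exN limN].
  destruct (imp_int01_RInt _ _ HC) as [exC limC].
  assert (Cpos : 0 < C).
  { assert (Ht01 : t0 < 1)
      by (destruct (Req_dec t0 1) as [E|E]; [subst; contradiction|lra]).
    apply (imp_int01_sqr_div_pos phi C t0 HC); auto; [lra|apply Hc; lra]. }
  assert (NC : 0 <= N + C).
  { apply le_epsilon. intros eta Heta.
    destruct (limN (eta / 3) ltac:(lra)) as [dN [HdN HlN]].
    destruct (limC (eta / 3) ltac:(lra)) as [dC [HdC HlC]].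
    destruct (imp_int01_sqr_div_small phi C HC (eta / 3) (Rmin dN dC) ltac:(lra)
                ltac:(apply Rmin_pos; lra)) as [e [He [He1 Hsmall]]].
    pose proof (Rmin_l dN dC). pose proof (Rmin_r dN dC).
    assert (KN := HlN e ltac:(lra) ltac:(lra)). assert (KC := HlC e ltac:(lra) ltac:(lra)).
    apply Rabs_def2 in KN. apply Rabs_def2 in KC.
    assert (exS : ex_RInt (picone_integrand phi dphi) e 1)
      by (apply ex_RInt_plus_R; [apply exN|apply exC]; lra).
    assert (K := picone_integral_ge phi dphi e Hd Hlc1 Hphi1 ltac:(lra) exS).
    unfold picone_integrand, absp in K.
    rewrite RInt_plus_R in K by (first [apply exN|apply exC]; lra).
    lra. }
  apply (Rmult_le_reg_r C); [auto|].
  unfold Rdiv. rewrite Rmult_assoc, Rinv_l, Rmult_1_r by lra. lra.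
Qed.

(** * The upper bound *)

Definition mass1 := mass 1.
(** [mass t / t^2], continued by its limit [f0 / 2] for [t <= 0]. *)
Definition mass_ratio (t : R) := if Rlt_dec 0 t then mass t / t^2 else f0 / 2.
Definition psi (t : R) := t * (mass_ratio t - mass1).
Definition dpsi (t : R) := fv t - mass_ratio t - mass1.

Lemma mass1_pos : 0 < mass1.
Proof. apply mass_pos. lra. Qed.

Lemma mass_ratio_pos t : 0 < t -> mass_ratio t = mass t / t^2.
Proof. intros H. unfold mass_ratio. destruct (Rlt_dec 0 t); [reflexivity|lra]. Qed.

Lemma derivable_pt_lim_mass_ratio t : 0 < t ->
  derivable_pt_lim mass_ratio t (fv t / t - 2 * mass_ratio t / t).
Proof.
  intros Ht.
  assert (H := derivable_pt_lim_div mass (fun y => y^2) t _ _ (derivable_pt_lim_mass t)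
     (derivable_pt_lim_pow t 2) ltac:(apply pow_nonzero; lra)).
  apply derivable_pt_lim_loc with (f := (mass / (fun y => y^2))%F) (d := t); auto.
  - intros y Hy. apply Rabs_def2 in Hy. rewrite mass_ratio_pos by lra. reflexivity.
  - match type of H with derivable_pt_lim _ _ ?L =>
      replace (fv t / t - 2 * mass_ratio t / t) with L; [exact H|] end.
    rewrite mass_ratio_pos by lra. unfold Rsqr. simpl. field. lra.
Qed.

Lemma mass_ratio_near0 eps : 0 < eps ->
  exists d, 0 < d /\ forall y, 0 < y < d -> Rabs (mass y / y^2 - f0 / 2) < eps.
Proof.
  intros He. destruct (continuity_pt_fv 0 eps He) as [d [Hd H]].
  exists d; split; auto. intros y Hy.
  assert (Hf : forall s, 0 < s < y -> Rabs (fv s - f0) < eps).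
  { intros s Hs. apply (H s). split; [split; [exact I|lra]|].
    change (Rabs (s - 0) < d). rewrite Rminus_0_r, Rabs_right; lra. }
  assert (U : mass y <= (f0 + eps) * y^2 / 2).
  { apply mass_le_quad_of; [lra|]. intros s Hs. specialize (Hf s Hs).
    apply Rabs_def2 in Hf. lra. }
  assert (L : (f0 - eps) * y^2 / 2 <= mass y).
  { apply mass_ge_quad_of; [lra|]. intros s Hs. specialize (Hf s Hs).
    apply Rabs_def2 in Hf. lra. }
  assert (Hy2 : 0 < y^2) by (apply pow_lt; lra).
  apply Rabs_def1.
  - apply (Rmult_lt_reg_r (y^2)); [auto|].
    replace ((mass y / y^2 - f0 / 2) * y^2) with (mass y - f0 * y^2 / 2) by (field; lra).
    nra.
  - apply (Rmult_lt_reg_r (y^2)); [auto|].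
    replace ((mass y / y^2 - f0 / 2) * y^2) with (mass y - f0 * y^2 / 2) by (field; lra).
    nra.
Qed.

Lemma continuity_pt_mass_ratio t : continuity_pt mass_ratio t.
Proof.
  destruct (Rtotal_order t 0) as [Ht|[->|Ht]].
  - apply derivable_continuous_pt. exists 0.
    apply derivable_pt_lim_loc with (f := fct_cte (f0 / 2)) (d := - t); [lra| |].
    + intros y Hy. apply Rabs_def2 in Hy. unfold mass_ratio, fct_cte.
      destruct (Rlt_dec 0 y); [lra|reflexivity].
    + apply derivable_pt_lim_const.
  - intros eps He. destruct (mass_ratio_near0 eps He) as [d [Hd H]].
    exists d; split; [lra|]. intros x [_ Hx]. change (Rabs (x - 0) < d) in Hx.
    change (Rabs (mass_ratio x - mass_ratio 0) < eps).
    rewrite Rminus_0_r in Hx. unfold mass_ratio at 2. destruct (Rlt_dec 0 0); [lra|].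
    unfold mass_ratio. destruct (Rlt_dec 0 x) as [Hx0|Hx0].
    + apply H. apply Rabs_def2 in Hx. lra.
    + rewrite Rminus_diag, Rabs_R0. lra.
  - apply derivable_continuous_pt. eexists. apply derivable_pt_lim_mass_ratio; auto.
Qed.

Lemma continuity_pt_psi t : continuity_pt psi t.
Proof.
  apply (continuity_pt_mult id (fun y => mass_ratio y - mass1)).
  - apply derivable_continuous_pt, derivable_pt_id.
  - apply (continuity_pt_minus mass_ratio (fct_cte mass1)).
    + apply continuity_pt_mass_ratio.
    + apply continuity_pt_const. intros ? ?. reflexivity.
Qed.

Lemma continuity_pt_dpsi t : continuity_pt dpsi t.
Proof.
  apply (continuity_pt_minus (fun y => fv y - mass_ratio y) (fct_cte mass1)).
  - apply (continuity_pt_minus fv mass_ratio).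
    + apply continuity_pt_fv.
    + apply continuity_pt_mass_ratio.
  - apply continuity_pt_const. intros ? ?. reflexivity.
Qed.

Lemma derivable_pt_lim_psi t : 0 < t -> derivable_pt_lim psi t (dpsi t).
Proof.
  intros Ht.
  assert (H := derivable_pt_lim_mult id (mass_ratio - fct_cte mass1)%F t _ _
    (derivable_pt_lim_id t)
    (derivable_pt_lim_minus mass_ratio (fct_cte mass1) t _ _
       (derivable_pt_lim_mass_ratio t Ht) (derivable_pt_lim_const mass1 t))).
  match type of H with derivable_pt_lim _ _ ?L =>
    replace (dpsi t) with L; [exact H|] end.
  unfold dpsi, id, fct_cte, minus_fct. field. lra.
Qed.

Lemma derivable_pt_lim_dpsi t : 0 < t < 1 ->
  derivable_pt_lim dpsi t (p * absp p (v t) * dv t - (fv t / t - 2 * mass_ratio t / t)).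
Proof.
  intros Ht.
  assert (H := derivable_pt_lim_minus (fv - mass_ratio)%F (fct_cte mass1) t _ _
    (derivable_pt_lim_minus fv mass_ratio t _ _
       (derivable_pt_lim_fv t Ht) (derivable_pt_lim_mass_ratio t ltac:(lra)))
    (derivable_pt_lim_const mass1 t)).
  rewrite Rminus_0_r in H. exact H.
Qed.

Lemma psi_1 : psi 1 = 0.
Proof. unfold psi, mass1. rewrite mass_ratio_pos by lra. field. Qed.

Definition psi_grad (t : R) := t * dpsi t ^ 2.
Definition psi_hardy (t : R) := t * (mass_ratio t - mass1) ^ 2.
Definition psi_energy (t : R) := t * (dpsi t ^ 2 - p * absp p (vext t) * psi t ^ 2).

Lemma continuity_pt_sqr_comp (f : R -> R) t : continuity_pt f t ->
  continuity_pt (fun y => f y ^ 2) t.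
Proof.
  intros H. apply (continuity_pt_comp f (fun y => y ^ 2)); [exact H|].
  apply derivable_continuous_pt, derivable_pow.
Qed.

Lemma continuity_pt_id_mult (f : R -> R) t : continuity_pt f t ->
  continuity_pt (fun y => y * f y) t.
Proof.
  apply (continuity_pt_mult id f). apply derivable_continuous_pt, derivable_pt_id.
Qed.

Lemma continuity_pt_psi_grad t : continuity_pt psi_grad t.
Proof. apply continuity_pt_id_mult, continuity_pt_sqr_comp, continuity_pt_dpsi. Qed.

Lemma continuity_pt_psi_hardy t : continuity_pt psi_hardy t.
Proof.
  apply continuity_pt_id_mult, continuity_pt_sqr_comp.
  apply (continuity_pt_minus mass_ratio (fct_cte mass1)).
  - apply continuity_pt_mass_ratio.
  - apply continuity_pt_const. intros ? ?. reflexivity.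
Qed.

Lemma continuity_pt_psi_energy t : continuity_pt psi_energy t.
Proof.
  apply continuity_pt_id_mult.
  apply (continuity_pt_minus (fun y => dpsi y ^ 2) (fun y => p * absp p (vext y) * psi y ^ 2)).
  - apply continuity_pt_sqr_comp, continuity_pt_dpsi.
  - apply (continuity_pt_mult (fun y => p * absp p (vext y)) (fun y => psi y ^ 2)).
    + apply (continuity_pt_scal (fun y => absp p (vext y))).
      apply (continuity_pt_comp vext (absp p)); [apply continuity_pt_vext|].
      apply continuity_pt_absp; [auto|apply vext_ge0].
    + apply continuity_pt_sqr_comp, continuity_pt_psi.
Qed.

(** Its derivative exceeds [psi_energy + psi_hardy] by [p mass1^2 t^3 |v|^(p-1) >= 0]. *)
Definition energy_potential (t : R) :=
  t * psi t * dpsi t - mass1 * t^2 * fv t + 2 * mass1 * mass t.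

Lemma derivable_pt_lim_energy_potential t : 0 < t < 1 ->
  derivable_pt_lim energy_potential t
   ((1 * psi t + t * dpsi t) * dpsi t
    + t * psi t * (p * absp p (v t) * dv t - (fv t / t - 2 * mass_ratio t / t))
    - mass1 * ((2 * t) * fv t + t^2 * (p * absp p (v t) * dv t))
    + 2 * mass1 * (t * fv t)).
Proof.
  intros Ht.
  assert (D1 := derivable_pt_lim_psi t ltac:(lra)). assert (D2 := derivable_pt_lim_dpsi t Ht).
  assert (D3 := derivable_pt_lim_fv t Ht). assert (D4 := derivable_pt_lim_mass t).
  apply is_derive_Reals. unfold energy_potential. auto_derive.
  - repeat split; first [exact I | eapply ex_derive_of_lim; eassumption].
  - rewrite (Derive_of_lim _ _ _ D1), (Derive_of_lim _ _ _ D2), (Derive_of_lim _ _ _ D3),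
      (Derive_of_lim _ _ _ D4). ring.
Qed.

Lemma continuity_pt_energy_potential t : continuity_pt energy_potential t.
Proof.
  apply (continuity_pt_plus (fun t => t * psi t * dpsi t - mass1 * t^2 * fv t)
                            (fun t => 2 * mass1 * mass t)).
  - apply (continuity_pt_minus (fun t => t * psi t * dpsi t) (fun t => mass1 * t^2 * fv t)).
    + apply (continuity_pt_mult (fun t => t * psi t) dpsi).
      * apply continuity_pt_id_mult, continuity_pt_psi.
      * apply continuity_pt_dpsi.
    + apply (continuity_pt_mult (fun t => mass1 * t^2) fv).
      * apply (continuity_pt_scal (fun t => t^2)), derivable_continuous_pt, derivable_pow.
      * apply continuity_pt_fv.
  - apply (continuity_pt_scal mass), continuity_pt_mass.
Qed.

Lemma psi_energy_hardy_le : RInt psi_energy 0 1 + RInt psi_hardy 0 1 <= 2 * mass1^2.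
Proof.
  assert (exN : ex_RInt psi_energy 0 1)
    by (apply ex_RInt_continuous_R; intros; apply continuity_pt_psi_energy).
  assert (exC : ex_RInt psi_hardy 0 1)
    by (apply ex_RInt_continuous_R; intros; apply continuity_pt_psi_hardy).
  rewrite <- RInt_plus_R by auto.
  assert (W1 : energy_potential 1 = 2 * mass1^2)
    by (unfold energy_potential; rewrite psi_1, fv_1; unfold mass1; ring).
  assert (W0 : energy_potential 0 = 0) by (unfold energy_potential; rewrite mass_0; ring).
  rewrite <- W1. replace (energy_potential 1) with (energy_potential 1 - energy_potential 0)
    by (rewrite W0; ring).
  eapply (RInt_le_increment (fun x => psi_energy x + psi_hardy x) energy_potential).
  - lra.
  - apply RInt_correct_R, ex_RInt_plus_R; auto.
  - intros; apply continuity_pt_energy_potential.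
  - intros; apply derivable_pt_lim_energy_potential; auto.
  - intros t Ht. cbv beta. assert (Hm := mass_pos t ltac:(lra)).
    unfold psi_energy, psi_hardy. rewrite vext_id by lra. unfold psi, dpsi.
    rewrite dv_eq by lra. rewrite !mass_ratio_pos by lra.
    set (Q := absp p (v t)). assert (HQ : 0 <= Q) by apply absp_ge0.
    match goal with |- ?A <= ?B => assert (E : B - A = mass1^2 * p * t^3 * Q) end.
    { field. lra. }
    assert (0 <= mass1^2 * p * t^3 * Q); [|lra].
    apply Rmult_le_pos; [|auto]. apply Rmult_le_pos; [|apply pow_le; lra].
    apply Rmult_le_pos; [apply pow2_ge_0|lra].
Qed.

Definition pohozaev_fn (t : R) :=
  mass t ^ 2 + 2 / (p + 1) * (t^2 * fv t * vext t) - 4 * vmax / (p + 1) * mass t.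

Lemma derivable_pt_lim_pohozaev_fn t : 0 < t < 1 -> derivable_pt_lim pohozaev_fn t
  (2 * mass t * (t * fv t) + 2 / (p + 1) * ((2 * t) * fv t * vext t
     + t^2 * (p * absp p (v t) * dv t) * vext t + t^2 * fv t * dv t)
   - 4 * vmax / (p + 1) * (t * fv t)).
Proof.
  intros Ht.
  assert (D3 := derivable_pt_lim_fv t Ht). assert (D4 := derivable_pt_lim_mass t).
  assert (D5 := derivable_pt_lim_vext t Ht).
  apply is_derive_Reals. unfold pohozaev_fn. auto_derive.
  - repeat split; first [exact I | eapply ex_derive_of_lim; eassumption].
  - rewrite (Derive_of_lim _ _ _ D3), (Derive_of_lim _ _ _ D4), (Derive_of_lim _ _ _ D5).
    field. lra.
Qed.

Lemma continuity_pt_pohozaev_fn t : continuity_pt pohozaev_fn t.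
Proof.
  apply (continuity_pt_minus (fun t => mass t ^ 2 + 2 / (p + 1) * (t^2 * fv t * vext t))
                             (fun t => 4 * vmax / (p + 1) * mass t)).
  - apply (continuity_pt_plus (fun t => mass t ^ 2) (fun t => 2 / (p + 1) * (t^2 * fv t * vext t))).
    + apply continuity_pt_sqr_comp, continuity_pt_mass.
    + apply (continuity_pt_scal (fun t => t^2 * fv t * vext t)).
      apply (continuity_pt_mult (fun t => t^2 * fv t) vext); [|apply continuity_pt_vext].
      apply (continuity_pt_mult (fun t => t^2) fv); [|apply continuity_pt_fv].
      apply derivable_continuous_pt, derivable_pow.
  - apply (continuity_pt_scal mass), continuity_pt_mass.
Qed.

(** The Pohozaev function is nonincreasing since [v <= vmax]. *)
Lemma mass1_le_pohozaev : mass1 <= 4 * vmax / (p + 1).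
Proof.
  assert (H : - pohozaev_fn 0 <= - pohozaev_fn 1).
  { eapply (le_of_derive_ge0 (fun t => - pohozaev_fn t)); [lra| | |].
    - intros c _. apply (continuity_pt_opp pohozaev_fn), continuity_pt_pohozaev_fn.
    - intros c Hc. apply (derivable_pt_lim_opp pohozaev_fn), derivable_pt_lim_pohozaev_fn; auto.
    - intros c Hc. cbv beta. rewrite vext_id, dv_eq, fv_eq by lra. unfold fp.
      set (Q := absp p (v c)).
      assert (HQ : 0 <= Q) by apply absp_ge0.
      assert (Hvc : 0 <= v c) by (apply v_ge0; lra).
      assert (HvM : v c <= vmax) by (apply v_le_vmax; lra).
      match goal with |- 0 <= - ?X =>
        replace X with (- (4 / (p + 1) * c * (Q * v c) * (vmax - v c))) by (field; split; lra) end.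
      rewrite Ropp_involutive.
      apply Rmult_le_pos; [|lra]. apply Rmult_le_pos; [|apply Rmult_le_pos; auto].
      apply Rmult_le_pos; [apply Rdiv_le_0_compat; lra|lra]. }
  unfold pohozaev_fn in H. rewrite mass_0, fv_1 in H. fold mass1 in H.
  pose proof mass1_pos.
  apply (Rmult_le_reg_r mass1); auto. nra.
Qed.

Definition rho := sqrt (vmax / (p * f0)).

Lemma rho_pos : 0 < rho.
Proof.
  apply sqrt_lt_R0, Rdiv_lt_0_compat; [apply vmax_pos|].
  pose proof f0_pos. apply Rmult_lt_0_compat; lra.
Qed.

Lemma f0_rho_sq : f0 * rho^2 = vmax / p.
Proof.
  pose proof f0_pos. pose proof vmax_pos. unfold rho. rewrite pow2_sqrt.
  - field. lra.
  - apply Rdiv_le_0_compat; [lra|]. apply Rmult_lt_0_compat; lra.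
Qed.

Lemma rho_sq_le : rho^2 <= / (4 * p).
Proof.
  pose proof f0_pos. pose proof f0_ge_4vmax. pose proof f0_rho_sq.
  apply (Rmult_le_reg_r (4 * p * f0)); [apply Rmult_lt_0_compat; lra|].
  replace (/ (4 * p) * (4 * p * f0)) with f0 by (field; lra).
  replace (rho^2 * (4 * p * f0)) with (4 * p * (f0 * rho^2)) by ring.
  rewrite f0_rho_sq. replace (4 * p * (vmax / p)) with (4 * vmax) by (field; lra). lra.
Qed.

Lemma rho_le : 64 <= p -> rho <= / 16.
Proof.
  intros H. pose proof rho_sq_le. pose proof rho_pos.
  assert (/ (4 * p) <= / 256) by (apply Rinv_le_contravar; lra).
  apply Rnot_lt_le. intros K. assert (/16 * /16 < rho * rho)
    by (apply Rmult_le_0_lt_compat; lra).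
  simpl in *. lra.
Qed.

(** On [[0, rho]] the solution stays within a factor [1 - 1/(4p)] of its
    maximum, so [v^p] stays above [f0/2]. *)
Lemma fv_ge_half_f0 t : 0 <= t <= rho -> rho <= 1 -> f0 / 2 <= fv t.
Proof.
  intros Ht Hr. pose proof vmax_pos. pose proof f0_pos.
  assert (Hv : vmax * (1 - / 4 / p) <= v t).
  { eapply Rle_trans; [|apply v_ge_quad; lra].
    assert (f0 * t^2 <= f0 * rho^2) by (apply Rmult_le_compat_l; [lra|apply pow_incr; lra]).
    rewrite f0_rho_sq in *.
    replace (vmax * (1 - / 4 / p)) with (vmax - vmax / p / 4) by (field; lra). lra. }
  assert (Hw : 0 < 1 - / 4 / p).
  { assert (/ 4 / p < 1); [|lra]. apply (Rmult_lt_reg_r p); [lra|]. unfold Rdiv.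
    rewrite Rmult_assoc, Rinv_l by lra. lra. }
  assert (Hwp : 0 < vmax * (1 - / 4 / p)) by (apply Rmult_lt_0_compat; lra).
  rewrite fv_eq, fp_pos by lra.
  eapply Rle_trans; [|apply Rle_Rpower_l; [lra|split; [exact Hwp|exact Hv]]].
  rewrite <- Rpower_mult_distr, <- f0_eq by lra.
  pose proof (Rpower_one_minus_div_ge_half p (/ 4) Hp ltac:(lra)).
  unfold Rdiv. apply Rmult_le_compat_l; lra.
Qed.

Lemma mass_rho_ge : rho <= 1 -> vmax / p / 4 <= mass rho.
Proof.
  intros Hr. rewrite <- f0_rho_sq. pose proof rho_pos.
  replace (f0 * rho ^ 2 / 4) with (f0 / 2 * rho ^ 2 / 2) by field.
  apply mass_ge_quad_of; [lra|]. intros s Hs. apply fv_ge_half_f0; lra.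
Qed.

(** On [[rho, 2 rho]], [mass t >= vmax/(4p)] while [mass1 <= 4 vmax/p], so
    [mass t / t^2 - mass1] is of order [mass1 / rho^2]. *)
Lemma psi_hardy_ge t : 64 <= p -> rho <= t <= 2 * rho ->
  mass1^2 / (16384 * rho^3) <= psi_hardy t.
Proof.
  intros H64 Ht. pose proof rho_pos. pose proof (rho_le H64). pose proof rho_sq_le.
  pose proof mass1_pos. pose proof vmax_pos. pose proof mass1_le_pohozaev.
  assert (Hm1 : mass1 / 16 <= mass rho).
  { pose proof (mass_rho_ge ltac:(lra)).
    assert (4 * vmax / (p + 1) <= 4 * vmax / p)
      by (unfold Rdiv; apply Rmult_le_compat_l; [lra|apply Rinv_le_contravar; lra]).
    assert (E : vmax / p / 4 = 4 * vmax / p / 16) by (field; lra). lra. }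
  unfold psi_hardy. rewrite mass_ratio_pos by lra.
  assert (Hmt : mass1 / 16 <= mass t) by (assert (mass rho <= mass t) by (apply mass_le; lra); lra).
  assert (Ht2 : t^2 <= 4 * rho^2)
    by (replace (4 * rho^2) with ((2 * rho)^2) by ring; apply pow_incr; lra).
  assert (Ht2' : 4 * rho^2 <= / 64) by (simpl in *; nra).
  assert (Htp : 0 < t^2) by (apply pow_lt; lra).
  set (y := mass t / t^2 - mass1).
  assert (Hyt : y * t^2 = mass t - mass1 * t^2) by (unfold y; field; lra).
  assert (Hy1 : mass1 / 32 <= y * t^2) by (rewrite Hyt; nra).
  assert (Hy0 : 0 < y).
  { apply Rnot_le_lt. intros K. assert (y * t^2 <= 0) by (apply Rmult_le_0_r; lra). lra. }
  assert (Hrho2 : 0 < rho^2) by (apply pow_lt; lra).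
  assert (Hy2 : mass1 / (128 * rho^2) <= y).
  { assert (y * t^2 <= y * (4 * rho^2)) by (apply Rmult_le_compat_l; lra).
    apply (Rmult_le_reg_r (4 * rho^2)); [lra|].
    replace (mass1 / (128 * rho^2) * (4 * rho^2)) with (mass1 / 32) by (field; lra). lra. }
  assert (Hy3 : (mass1 / (128 * rho^2))^2 <= y^2).
  { apply pow_incr. split; [|auto]. apply Rdiv_le_0_compat; lra. }
  replace (mass1^2 / (16384 * rho^3)) with (rho * (mass1 / (128 * rho^2))^2) by (field; lra).
  apply Rmult_le_compat; try lra. apply pow2_ge_0.
Qed.

Lemma psi_hardy_integral_ge : 64 <= p -> mass1^2 * p / 4096 <= RInt psi_hardy 0 1.
Proof.
  intros H64. pose proof rho_pos. pose proof (rho_le H64). pose proof rho_sq_le.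
  assert (exC : forall x y, ex_RInt psi_hardy x y)
    by (intros; apply ex_RInt_continuous_R; intros; apply continuity_pt_psi_hardy).
  assert (Hnn : forall t, 0 <= t -> 0 <= psi_hardy t)
    by (intros t Ht; unfold psi_hardy; apply Rmult_le_pos; [lra|apply pow2_ge_0]).
  rewrite <- (RInt_Chasles_R psi_hardy 0 rho 1), <- (RInt_Chasles_R psi_hardy rho (2 * rho) 1)
    by auto.
  assert (I1 : 0 <= RInt psi_hardy 0 rho)
    by (apply RInt_ge_0; [lra|auto|intros; apply Hnn; lra]).
  assert (I3 : 0 <= RInt psi_hardy (2 * rho) 1)
    by (apply RInt_ge_0; [lra|auto|intros; apply Hnn; lra]).
  assert (I2 : (2 * rho - rho) * (mass1^2 / (16384 * rho^3)) <= RInt psi_hardy rho (2 * rho))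
    by (apply RInt_ge_const_mul; auto; [lra|intros; apply psi_hardy_ge; lra]).
  assert (Hrho2 : 0 < rho^2) by (apply pow_lt; lra).
  assert (E : (2 * rho - rho) * (mass1^2 / (16384 * rho^3)) = mass1^2 / 16384 / rho^2)
    by (field; lra).
  assert (mass1^2 * p / 4096 * rho^2 <= mass1^2 / 16384).
  { assert (rho^2 * (4 * p) <= 1).
    { apply (Rmult_le_reg_r (/ (4 * p))); [apply Rinv_0_lt_compat; lra|].
      rewrite Rmult_assoc, Rinv_r, Rmult_1_r, Rmult_1_l by lra. auto. }
    assert (0 <= mass1^2) by apply pow2_ge_0.
    replace (mass1^2 * p / 4096 * rho^2) with (mass1^2 / 16384 * (rho^2 * (4 * p))) by field.
    nra. }
  assert (mass1^2 * p / 4096 <= mass1^2 / 16384 / rho^2); [|lra].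
  apply (Rmult_le_reg_r (rho^2)); [auto|].
  replace (mass1^2 / 16384 / rho^2 * rho^2) with (mass1^2 / 16384) by (field; lra). lra.
Qed.

Lemma psi_in_rayleigh_set : 0 < RInt psi_hardy 0 1 ->
  rayleigh_set p v (RInt psi_energy 0 1 / RInt psi_hardy 0 1).
Proof.
  intros Cpos.
  exists psi, dpsi, (RInt psi_grad 0 1), (RInt psi_hardy 0 1), (RInt psi_energy 0 1).
  split; [intros t Ht; apply derivable_pt_lim_psi; lra|].
  split; [intros t Ht; apply continuity_pt_psi|].
  split.
  { intros eps He. destruct (continuity_pt_psi 1 eps He) as [d [Hd Hcl]].
    exists d; split; auto. intros s Hs. destruct (Req_dec s 1) as [->|Hne].
    - rewrite Rminus_diag, Rabs_R0; lra.
    - apply (Hcl s). split; [split; [exact I|auto]|].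
      change (Rabs (s - 1) < d). rewrite Rabs_left; lra. }
  split; [apply psi_1|].
  split.
  { apply NNPP. intros H0.
    assert (E : RInt psi_hardy 0 1 = RInt (fun _ => 0) 0 1).
    { apply RInt_ext. intros t Ht. rewrite Rmin_left, Rmax_right in Ht by lra.
      assert (psi t = 0) by (apply NNPP; intros Hn; apply H0; exists t; split; [lra|auto]).
      unfold psi in *. unfold psi_hardy. nra. }
    rewrite E, RInt_const in Cpos. change (0 < (1 - 0) * 0) in Cpos. lra. }
  split; [apply imp_int01_continuous; [apply continuity_pt_psi_grad|reflexivity]|].
  split.
  { apply imp_int01_continuous; [apply continuity_pt_psi_hardy|].
    intros t Ht. unfold psi_hardy, psi. field. lra. }
  split.
  { apply imp_int01_continuous; [apply continuity_pt_psi_energy|].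
    intros t Ht. unfold psi_energy. rewrite vext_id by lra. reflexivity. }
  reflexivity.
Qed.

Lemma rayleigh_upper : 64 <= p -> exists q, rayleigh_set p v q /\ q <= -1 + 8192 / p.
Proof.
  intros H64. pose proof mass1_pos.
  pose proof (psi_hardy_integral_ge H64) as HC. pose proof psi_energy_hardy_le as HNC.
  set (N := RInt psi_energy 0 1) in *. set (C := RInt psi_hardy 0 1) in *.
  assert (0 < mass1^2 * p / 4096)
    by (apply Rdiv_lt_0_compat; [apply Rmult_lt_0_compat; [apply pow_lt|]|]; lra).
  assert (Cpos : 0 < C) by lra.
  exists (N / C). split; [apply psi_in_rayleigh_set, Cpos|].
  assert (N / C + 1 <= 2 * mass1^2 / C).
  { replace (N / C + 1) with ((N + C) / C) by (field; lra).
    unfold Rdiv. apply Rmult_le_compat_r; [left; apply Rinv_0_lt_compat; lra|lra]. }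
  assert (2 * mass1^2 / C <= 8192 / p); [|lra].
  apply (Rmult_le_reg_r C); [lra|]. replace (2 * mass1^2 / C * C) with (2 * mass1^2) by (field; lra).
  apply Rle_trans with (8192 / p * (mass1^2 * p / 4096)); [right; field; lra|].
  apply Rmult_le_compat_l; [apply Rdiv_le_0_compat; lra|lra].
Qed.

End LaneEmden.

Theorem mainTheorem7 (v : R -> R -> R) (nu1 : R -> R) :
  (forall p, 1 < p -> LE_positive_solution p (v p)) ->
  (forall p, 1 < p -> is_glb_R (rayleigh_set p (v p)) (nu1 p)) ->
  forall eps, 0 < eps -> exists M, 1 < M /\
    forall p, M < p -> Rabs (nu1 p - (-1)) < eps.
Proof.
  intros Hsol Hglb eps Heps.
  exists (Rmax 64 (8192 / eps) + 1).
  pose proof (Rmax_l 64 (8192 / eps)). pose proof (Rmax_r 64 (8192 / eps)).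
  split; [lra|]. intros p Hp.
  destruct (Hsol p ltac:(lra)) as [Hpos [Hv1 [Hlc [Hd0 [dv [Hdv Hdd]]]]]].
  destruct (Hglb p ltac:(lra)) as [Hlb Hgr].
  assert (Hlow : -1 <= nu1 p).
  { apply Hgr. intros q Hq. apply (rayleigh_ge_neg1 p (v p) dv); auto; lra. }
  destruct (rayleigh_upper p (v p) dv ltac:(lra) Hpos Hv1 Hlc Hd0 Hdv Hdd ltac:(lra))
    as [q [Hq Hq_le]].
  assert (Hup : nu1 p <= q) by (apply Hlb, Hq).
  assert (8192 / p < eps).
  { apply (Rmult_lt_reg_r (p / eps)); [apply Rdiv_lt_0_compat; lra|].
    replace (8192 / p * (p / eps)) with (8192 / eps) by (field; lra).
    replace (eps * (p / eps)) with p by (field; lra). lra. }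
  rewrite Rabs_right; lra.
Qed.
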